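(* Let $\mathcal{V}$ be a convex open subset of a Banach space $\mathcal{Y}$, $f:\mathcal{V}\to\mathbb{R}$ a function, and $F:[0,+\infty)\to[0,+\infty)$ a non-decreasing locally Lipschitz function. Fix $x_0\in\mathcal{V}$ and let $s:[0,R)\to\mathbb{R}$, with $R<\infty$, be a solution of $s'=F(s)$, $s(0)=|f(x_0)|$. If $|D|f(x)\le F(|f(x)|)$ for all $x\in\mathcal{V}$, then $|f(x)|\le s(\|x-x_0\|)$ for all $x\in\mathcal{V}\cap B(x_0,R)$.
   Context: For $f:\mathcal{Y}\supset\mathcal{V}\to\mathbb{R}$, the metric derivative (pointwise Lipschitz constant) is $|D|f(x):=\limsup_{r\to0}\sup_{y\in B(x,r)}\frac{|f(x)-f(y)|}{\|x-y\|}$. *)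

From Stdlib Require Import Reals Lra.
Open Scope R_scope.

Record Banach := {
  carrier :> Type;
  vzero : carrier;
  vadd : carrier -> carrier -> carrier;
  vopp : carrier -> carrier;
  vscal : R -> carrier -> carrier;
  vnorm : carrier -> R;
  vadd_assoc : forall x y z, vadd x (vadd y z) = vadd (vadd x y) z;
  vadd_comm : forall x y, vadd x y = vadd y x;
  vadd_0 : forall x, vadd x vzero = x;
  vadd_opp : forall x, vadd x (vopp x) = vzero;
  vscal_assoc : forall a b x, vscal a (vscal b x) = vscal (a * b) x;
  vscal_1 : forall x, vscal 1 x = x;
  vscal_distr_l : forall a x y, vscal a (vadd x y) = vadd (vscal a x) (vscal a y);
  vscal_distr_r : forall a b x, vscal (a + b) x = vadd (vscal a x) (vscal b x);
  vnorm_nonneg : forall x, 0 <= vnorm x;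
  vnorm_eq0 : forall x, vnorm x = 0 -> x = vzero;
  vnorm_scal : forall a x, vnorm (vscal a x) = Rabs a * vnorm x;
  vnorm_triangle : forall x y, vnorm (vadd x y) <= vnorm x + vnorm y;
  vcomplete : forall u : nat -> carrier,
    (forall eps, 0 < eps -> exists N, forall n m, (n >= N)%nat -> (m >= N)%nat ->
        vnorm (vadd (u n) (vopp (u m))) < eps) ->
    exists l, forall eps, 0 < eps -> exists N, forall n, (n >= N)%nat ->
        vnorm (vadd (u n) (vopp l)) < eps
}.

Definition vdist {Y : Banach} (x y : Y) : R := vnorm Y (vadd Y x (vopp Y y)).

Definition is_convex {Y : Banach} (V : Y -> Prop) : Prop :=
  forall x y t, V x -> V y -> 0 <= t <= 1 ->
    V (vadd Y (vscal Y (1 - t) x) (vscal Y t y)).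

Definition is_open {Y : Banach} (V : Y -> Prop) : Prop :=
  forall x, V x -> exists r, 0 < r /\ forall y, vdist y x < r -> V y.

Definition ratio_sup_le {Y : Banach} (V : Y -> Prop) (f : Y -> R)
    (x : Y) (r M : R) : Prop :=
  forall y, V y -> 0 < vdist x y -> vdist y x < r ->
    Rabs (f x - f y) / vdist x y <= M.

(* metric derivative bound:  |D|f(x) := limsup_{r->0} sup_{y in B(x,r)} ... <= c,
   i.e. for every eps > 0 there is delta > 0 such that the inner sup is
   <= c + eps for every r in (0, delta). *)
Definition metric_deriv_le {Y : Banach} (V : Y -> Prop) (f : Y -> R)
    (x : Y) (c : R) : Prop :=
  forall eps, 0 < eps -> exists delta, 0 < delta /\
    forall r, 0 < r < delta -> ratio_sup_le V f x r (c + eps).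

Definition nondecr_on_nonneg (F : R -> R) : Prop :=
  forall a b, 0 <= a -> a <= b -> F a <= F b.

Definition loc_lipschitz_on_nonneg (F : R -> R) : Prop :=
  forall a, 0 <= a -> exists delta L, 0 < delta /\ 0 <= L /\
    forall u v, 0 <= u -> 0 <= v -> Rabs (u - a) < delta -> Rabs (v - a) < delta ->
      Rabs (F u - F v) <= L * Rabs (u - v).

Definition deriv_within_0R (s : R -> R) (Rr t d : R) : Prop :=
  forall eps, 0 < eps -> exists delta, 0 < delta /\
    forall h, h <> 0 -> Rabs h < delta -> 0 <= t + h < Rr ->
      Rabs ((s (t + h) - s t) / h - d) < eps.

From Stdlib Require Import Reals Lra Classical.
Open Scope R_scope.

(* Along the unit-speed segment from x0 to x, g(t) = |f(gam t)| has local slope at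
   most F(g t), while s has slope exactly F(s t).  We show g <= s on [0, |x - x0|] by
   real induction.  Passing to a limit point from the left only needs g - s to jump up
   at most linearly.  To the right of a point T where g <= s, F is L-Lipschitz near
   s(T), so the gap g - s satisfies a Gronwall-type inequality; it therefore stays below
   eps * exp((L + 1)(t - T)) for every eps > 0, i.e. below 0. *)

Lemma exp_le (x y : R) : x <= y -> exp x <= exp y.
Proof. intros [Hlt| ->]; [left; exact (exp_increasing _ _ Hlt) | lra]. Qed.

Lemma Rabs_le_inv (a b : R) : Rabs a <= b -> - b <= a <= b.
Proof. split_Rabs; lra. Qed.

Lemma real_induction (a b : R) (P : R -> Prop) :
  P a ->
  (forall t, a < t <= b -> (forall u, a <= u < t -> P u) -> P t) ->
  (forall t, a <= t < b -> (forall u, a <= u <= t -> P u) ->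
     exists del, 0 < del /\ forall u, t < u < t + del -> u <= b -> P u) ->
  forall t, a <= t <= b -> P t.
Proof.
  intros Pa Hclosed Hopen t Ht.
  set (E := fun t => a <= t <= b /\ forall u, a <= u <= t -> P u).
  assert (Ea : E a) by (split; [lra | intros u Hu; replace u with a by lra; exact Pa]).
  assert (Ebound : bound E) by (exists b; intros v [Hv _]; lra).
  destruct (completeness E Ebound (ex_intro _ a Ea)) as [m [Hub Hlub]].
  assert (Ham : a <= m) by exact (Hub a Ea).
  assert (Hmb : m <= b) by (apply Hlub; intros v [Hv _]; lra).
  assert (Pbelow : forall u, a <= u < m -> P u).
  { intros u Hu. destruct (classic (exists v, E v /\ u < v)) as [[v [[_ Pv] Huv]] | Hnone].
    - apply Pv; lra.
    - enough (m <= u) by lra. apply Hlub. intros v Ev.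
      destruct (Rle_or_lt v u) as [|Huv]; [assumption | exfalso; eauto]. }
  assert (Pupto : forall u, a <= u <= m -> P u).
  { intros u Hu. destruct (Req_dec u m) as [->|]; [|apply Pbelow; lra].
    destruct (Req_dec m a) as [->|]; [exact Pa | apply Hclosed; [lra | exact Pbelow]]. }
  enough (m = b) by (subst m; apply Pupto; lra).
  destruct (Rle_lt_or_eq_dec m b Hmb) as [Hlt|]; [exfalso | assumption].
  destruct (Hopen m (conj Ham Hlt) Pupto) as [del [Hdel Pafter]].
  set (m' := Rmin (m + del / 2) b).
  assert (m < m' <= m + del / 2 /\ m' <= b)
    by (unfold m', Rmin; destruct Rle_dec; lra).
  assert (Em' : E m').
  { split; [lra|]. intros u Hu. destruct (Rle_or_lt u m); [apply Pupto | apply Pafter]; lra. }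
  pose proof (Hub m' Em'). lra.
Qed.

Definition left_upper_lipschitz (w : R -> R) (a t : R) : Prop :=
  exists C del, 0 < del /\
    forall u, a <= u < t -> t - u < del -> w t <= w u + C * (t - u).

Lemma le_of_left_upper_lipschitz (w : R -> R) (a t M : R) :
  a < t -> left_upper_lipschitz w a t ->
  (forall u, a <= u < t -> w u <= M) -> w t <= M.
Proof.
  intros Hat [C [del [Hdel Hw]]] HM. apply Rle_plus_epsilon. intros eps Heps.
  set (q := Rabs C + 1).
  assert (Hq : 0 < q) by (unfold q; pose proof (Rabs_pos C); lra).
  set (k := Rmin (Rmin del (t - a) / 2) (eps / q)).
  assert (Hk : 0 < k /\ k < del /\ k < t - a /\ k * q <= eps).
  { pose proof (Rmin_l del (t - a)). pose proof (Rmin_r del (t - a)).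
    pose proof (Rmin_l (Rmin del (t - a) / 2) (eps / q)) as Hk_dom.
    pose proof (Rmin_r (Rmin del (t - a) / 2) (eps / q)) as Hk_eps.
    assert (0 < eps / q) by (apply Rdiv_lt_0_compat; lra).
    assert (0 < k) by (apply Rmin_glb_lt; [apply Rmin_case|]; lra).
    apply Rmult_le_compat_r with (r := q) in Hk_eps; [| lra].
    replace (eps / q * q) with eps in Hk_eps by (field; lra). fold k in Hk_dom, Hk_eps. lra. }
  assert (HCk : C * k <= eps) by (pose proof (RRle_abs C); unfold q in Hk; nra).
  pose proof (Hw (t - k) ltac:(lra) ltac:(lra)) as Hwk.
  pose proof (HM (t - k) ltac:(lra)).
  replace (t - (t - k)) with k in Hwk by ring. lra.
Qed.

Lemma gronwall_nonpos (w : R -> R) (a b K rho : R) :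
  0 <= K -> 0 < rho -> w a <= 0 ->
  (forall t, a < t <= b -> left_upper_lipschitz w a t) ->
  (forall t p, a <= t < b -> 0 < p <= rho -> w t <= p ->
     exists del, 0 < del /\ forall u, t < u < t + del -> u <= b -> w u <= p * (1 + K * (u - t))) ->
  forall t, a <= t <= b -> w t <= 0.
Proof.
  intros HK Hrho Hwa Hleft Hright t Ht.
  set (E := exp (K * (b - a))).
  assert (HE : 0 < E) by apply exp_pos.
  assert (Hexp_E : forall u, u <= b -> exp (K * (u - a)) <= E)
    by (intros u Hu; apply exp_le, Rmult_le_compat_l; lra).
  (* Perturb the bound 0 into eps * exp (K (u - a)), which the local estimates propagate. *)
  assert (Hpert : forall eps, 0 < eps -> eps * E <= rho ->
            forall u, a <= u <= b -> w u <= eps * exp (K * (u - a))).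
  { intros eps Heps HepsE.
    apply real_induction.
    - rewrite Rminus_diag, Rmult_0_r, exp_0. lra.
    - intros u Hu Hbelow. apply le_of_left_upper_lipschitz with a; [lra | apply Hleft; lra |].
      intros v Hv. apply Rle_trans with (1 := Hbelow v Hv).
      apply Rmult_le_compat_l, exp_le, Rmult_le_compat_l; lra.
    - intros u Hu Hupto.
      set (p := eps * exp (K * (u - a))).
      assert (Hp : 0 < p) by (apply Rmult_lt_0_compat; [lra | apply exp_pos]).
      assert (Hp_rho : p <= rho)
        by (apply Rle_trans with (eps * E); [apply Rmult_le_compat_l, Hexp_E|]; lra).
      destruct (Hright u p ltac:(lra) ltac:(lra) (Hupto u ltac:(lra))) as [del [Hdel Hw]].
      exists del. split; [exact Hdel|]. intros v Hv Hvb.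
      apply Rle_trans with (1 := Hw v Hv Hvb).
      replace (eps * exp (K * (v - a))) with (p * exp (K * (v - u)))
        by (unfold p; rewrite Rmult_assoc, <- exp_plus; f_equal; f_equal; ring).
      apply Rmult_le_compat_l; [lra | apply exp_ineq1_le]. }
  apply Rle_plus_epsilon. intros e He.
  set (eps := Rmin rho e / E).
  assert (Heps : 0 < eps) by (apply Rdiv_lt_0_compat; [apply Rmin_glb_lt|]; lra).
  assert (HepsE : eps * E = Rmin rho e) by (unfold eps; field; lra).
  pose proof (Rmin_l rho e). pose proof (Rmin_r rho e).
  apply Rle_trans with (eps * exp (K * (t - a))); [apply Hpert; lra|].
  apply Rle_trans with (eps * E); [apply Rmult_le_compat_l, Hexp_E|]; lra.
Qed.

Lemma deriv_within_0R_increment (s : R -> R) (Rr t c eta : R) :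
  deriv_within_0R s Rr t c -> 0 < eta ->
  exists del, 0 < del /\ forall u, 0 <= u < Rr -> Rabs (u - t) < del ->
    Rabs (s u - s t - c * (u - t)) <= eta * Rabs (u - t).
Proof.
  intros Hs Heta. destruct (Hs eta Heta) as [del [Hdel Hquot]].
  exists del. split; [exact Hdel|]. intros u Hu Hut.
  destruct (Req_dec u t) as [->|Hne].
  { rewrite !Rminus_diag, Rmult_0_r, Rminus_0_r, Rabs_R0. lra. }
  replace u with (t + (u - t)) in Hu by ring.
  pose proof (Hquot (u - t) ltac:(lra) Hut Hu) as Hq.
  replace (t + (u - t)) with u in Hq by ring.
  replace (s u - s t - c * (u - t)) with ((u - t) * ((s u - s t) / (u - t) - c)) by (field; lra).
  rewrite Rabs_mult, Rmult_comm. apply Rmult_le_compat_r; [apply Rabs_pos | lra].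
Qed.

Lemma deriv_within_0R_continuous (s : R -> R) (Rr t c eps : R) :
  deriv_within_0R s Rr t c -> 0 < eps ->
  exists del, 0 < del /\ forall u, 0 <= u < Rr -> Rabs (u - t) < del -> Rabs (s u - s t) <= eps.
Proof.
  intros Hs Heps. destruct (deriv_within_0R_increment s Rr t c 1 Hs Rlt_0_1) as [del [Hdel Hinc]].
  set (k := Rabs c + 1).
  assert (Hk : 0 < k) by (unfold k; pose proof (Rabs_pos c); lra).
  exists (Rmin del (eps / k)). split; [apply Rmin_glb_lt; [|apply Rdiv_lt_0_compat]; lra|].
  intros u Hu Hut. pose proof (Rmin_l del (eps / k)). pose proof (Rmin_r del (eps / k)).
  pose proof (Hinc u Hu ltac:(lra)) as Hsu.
  assert (Habs : Rabs (s u - s t) <= k * Rabs (u - t)).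
  { replace (s u - s t) with ((s u - s t - c * (u - t)) + c * (u - t)) by ring.
    eapply Rle_trans; [apply Rabs_triang|]. rewrite Rabs_mult. unfold k. lra. }
  apply Rle_trans with (1 := Habs).
  apply Rle_trans with (k * (eps / k)); [apply Rmult_le_compat_l; lra | right; field; lra].
Qed.

Lemma nondecr_lipschitz_increment_le (F : R -> R) (c del L x y p : R) :
  nondecr_on_nonneg F -> 0 <= L ->
  (forall u v, 0 <= u -> 0 <= v -> Rabs (u - c) < del -> Rabs (v - c) < del ->
     Rabs (F u - F v) <= L * Rabs (u - v)) ->
  0 <= x -> 0 <= y -> 0 <= p -> Rabs (y - c) + p < del -> x - y <= p ->
  F x - F y <= L * p.
Proof.
  intros Hmono HL Hlip Hx Hy Hp Hnear Hxy.
  destruct (Rle_or_lt x y) as [Hle|Hlt].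
  - pose proof (Hmono x y Hx Hle). pose proof (Rmult_le_pos L p HL Hp). lra.
  - pose proof (Rabs_pos (y - c)).
    assert (Hx_near : Rabs (x - c) < del)
      by (pose proof (Rabs_le_inv (y - c) _ (Rle_refl _)); apply Rabs_def1; lra).
    assert (Hy_near : Rabs (y - c) < del) by lra.
    pose proof (Hlip x y Hx Hy Hx_near Hy_near) as HF.
    rewrite (Rabs_right (x - y)) in HF by lra.
    pose proof (Rle_abs (F x - F y)). pose proof (Rmult_le_compat_l L _ _ HL Hxy). lra.
Qed.

Definition slope_le (g : R -> R) (a b c t : R) : Prop :=
  forall eta, 0 < eta -> exists del, 0 < del /\
    forall u, a <= u <= b -> Rabs (u - t) < del -> Rabs (g u - g t) <= (c + eta) * Rabs (u - t).

Section Comparison.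

Variables (g s F : R -> R) (d Rr : R).
Hypothesis d_lt_Rr : d < Rr.
Hypothesis F_nondecr : nondecr_on_nonneg F.
Hypothesis F_loc_lipschitz : loc_lipschitz_on_nonneg F.
Hypothesis g_nonneg : forall t, 0 <= t <= d -> 0 <= g t.
Hypothesis s_nonneg : forall t, 0 <= t < Rr -> 0 <= s t.
Hypothesis g_slope : forall t, 0 <= t <= d -> slope_le g 0 d (F (g t)) t.
Hypothesis s_deriv : forall t, 0 <= t < Rr -> deriv_within_0R s Rr t (F (s t)).

Let gap u := g u - s u.

Lemma gap_increment t eta : 0 <= t <= d -> 0 < eta ->
  exists del, 0 < del /\ forall u, 0 <= u <= d -> Rabs (u - t) < del ->
    let c := F (g t) - F (s t) + 2 * eta in
    (t < u -> gap u <= gap t + c * (u - t)) /\ (u < t -> gap t <= gap u + c * (t - u)).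
Proof.
  intros Ht Heta.
  destruct (g_slope t Ht eta Heta) as [dg [Hdg Hg]].
  destruct (deriv_within_0R_increment s Rr t _ eta (s_deriv t ltac:(lra)) Heta) as [ds [Hds Hs]].
  exists (Rmin dg ds). split; [apply Rmin_glb_lt; lra|].
  intros u Hu Hut c. pose proof (Rmin_l dg ds). pose proof (Rmin_r dg ds).
  pose proof (Hg u Hu ltac:(lra)) as Hgu. pose proof (Hs u ltac:(lra) ltac:(lra)) as Hsu.
  apply Rabs_le_inv in Hgu, Hsu.
  unfold gap, c; split; intros Hlt;
    [rewrite Rabs_right in Hgu, Hsu by lra | rewrite Rabs_left in Hgu, Hsu by lra]; nra.
Qed.

Lemma gap_left_upper_lipschitz a t : 0 <= a -> a < t <= d -> left_upper_lipschitz gap a t.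
Proof.
  intros Ha Ht. destruct (gap_increment t 1 ltac:(lra) Rlt_0_1) as [del [Hdel Hinc]].
  exists (F (g t) - F (s t) + 2 * 1), del. split; [exact Hdel|].
  intros u Hu Htu. apply (Hinc u ltac:(lra)); [rewrite Rabs_left; lra | lra].
Qed.

Lemma gap_nonpos_right T : 0 <= T < d -> gap T <= 0 ->
  exists h, 0 < h /\ forall u, T < u < T + h -> u <= d -> gap u <= 0.
Proof.
  intros HT HgapT.
  assert (HsT : 0 <= s T) by (apply s_nonneg; lra).
  destruct (F_loc_lipschitz (s T) HsT) as [dL [L [HdL [HL Hlip]]]].
  destruct (deriv_within_0R_continuous s Rr T _ (dL / 4) (s_deriv T ltac:(lra)) ltac:(lra))
    as [ds [Hds Hs_near]].
  set (h := Rmin (ds / 2) (d - T)).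
  assert (Hh : 0 < h /\ h <= ds / 2 /\ h <= d - T)
    by (unfold h; split; [apply Rmin_glb_lt | split; [apply Rmin_l | apply Rmin_r]]; lra).
  exists h. split; [lra|]. intros u Hu Hud.
  apply (gronwall_nonpos gap T (T + h) (L + 1) (dL / 4)); [lra | lra | exact HgapT | | | lra].
  - intros t Ht. apply gap_left_upper_lipschitz; lra.
  - intros t p Ht Hp Hgap_t.
    assert (HFgap : F (g t) - F (s t) <= L * p).
    { apply (nondecr_lipschitz_increment_le F (s T) dL); try assumption; try lra.
      - apply g_nonneg; lra.
      - apply s_nonneg; lra.
      - pose proof (Hs_near t ltac:(lra) ltac:(rewrite Rabs_right; lra)). lra. }
    destruct (gap_increment t (p / 2) ltac:(lra) ltac:(lra)) as [del [Hdel Hinc]].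
    exists del. split; [exact Hdel|]. intros v Hv Hvb.
    destruct (Hinc v ltac:(lra) ltac:(rewrite Rabs_right; lra)) as [Hright _].
    specialize (Hright ltac:(lra)). nra.
Qed.

Lemma gap_comparison : g 0 <= s 0 -> forall t, 0 <= t <= d -> g t <= s t.
Proof.
  intros H0 t Ht. enough (gap t <= 0) by (unfold gap in *; lra).
  revert t Ht. apply real_induction.
  - unfold gap; lra.
  - intros t Ht Hbelow. apply le_of_left_upper_lipschitz with 0; [lra | | exact Hbelow].
    apply gap_left_upper_lipschitz; lra.
  - intros T HT Hupto. apply gap_nonpos_right; [lra | apply Hupto; lra].
Qed.

End Comparison.

Section Segment.

Variable Y : Banach.

Lemma vadd_idem_zero (z : Y) : vadd Y z z = z -> z = vzero Y.
Proof.
  intros Hz. rewrite <- (vadd_0 Y z) at 1. rewrite <- (vadd_opp Y z) at 1.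
  rewrite vadd_assoc, Hz, vadd_opp. reflexivity.
Qed.

Lemma vscal_0 (x : Y) : vscal Y 0 x = vzero Y.
Proof. apply vadd_idem_zero. rewrite <- vscal_distr_r. f_equal. ring. Qed.

Lemma vopp_unique (x y : Y) : vadd Y x y = vzero Y -> y = vopp Y x.
Proof.
  intros Hxy. rewrite <- (vadd_0 Y y), <- (vadd_opp Y x).
  rewrite vadd_assoc, (vadd_comm Y y x), Hxy, vadd_comm, vadd_0. reflexivity.
Qed.

Lemma vopp_vscal (x : Y) : vopp Y x = vscal Y (-1) x.
Proof.
  symmetry. apply vopp_unique. rewrite <- (vscal_1 Y x) at 1.
  rewrite <- vscal_distr_r. replace (1 + -1) with 0 by ring. apply vscal_0.
Qed.

Lemma vdist_eq0 (x y : Y) : vdist x y = 0 -> x = y.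
Proof.
  intros Hxy. apply vnorm_eq0 in Hxy. rewrite vadd_comm in Hxy. apply vopp_unique in Hxy.
  rewrite Hxy. symmetry. apply vopp_unique. rewrite vadd_comm. apply vadd_opp.
Qed.

Lemma vadd_add_swap (a b c e : Y) :
  vadd Y (vadd Y a b) (vadd Y c e) = vadd Y (vadd Y a c) (vadd Y b e).
Proof.
  rewrite !vadd_assoc. f_equal. rewrite <- !vadd_assoc. f_equal. apply vadd_comm.
Qed.

Definition segment (x0 x : Y) (l : R) : Y := vadd Y (vscal Y (1 - l) x0) (vscal Y l x).

Lemma segment_0 (x0 x : Y) : segment x0 x 0 = x0.
Proof. unfold segment. rewrite Rminus_0_r, vscal_0, vscal_1, vadd_0. reflexivity. Qed.

Lemma segment_1 (x0 x : Y) : segment x0 x 1 = x.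
Proof. unfold segment. rewrite Rminus_diag, vscal_0, vscal_1, vadd_comm, vadd_0. reflexivity. Qed.

Lemma segment_sub (x0 x : Y) (l l' : R) :
  vadd Y (segment x0 x l) (vopp Y (segment x0 x l')) = vscal Y (l - l') (vadd Y x (vopp Y x0)).
Proof.
  unfold segment. rewrite !vopp_vscal, !vscal_distr_l, !vscal_assoc, vadd_add_swap, <- !vscal_distr_r.
  rewrite vadd_comm. f_equal; f_equal; ring.
Qed.

Lemma vdist_segment (x0 x : Y) (l l' : R) :
  vdist (segment x0 x l) (segment x0 x l') = Rabs (l - l') * vdist x x0.
Proof. unfold vdist. rewrite segment_sub, vnorm_scal. reflexivity. Qed.

End Segment.

Lemma slope_le_along_isometry (Y : Banach) (V : Y -> Prop) (f : Y -> R) (gam : R -> Y)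
    (a b c t : R) :
  (forall u v, a <= u <= b -> a <= v <= b -> vdist (gam u) (gam v) = Rabs (u - v)) ->
  (forall u, a <= u <= b -> V (gam u)) -> a <= t <= b ->
  metric_deriv_le V f (gam t) c -> slope_le (fun u => Rabs (f (gam u))) a b c t.
Proof.
  intros Hiso HV Ht Hmd eta Heta. destruct (Hmd eta Heta) as [del [Hdel Hratio]].
  exists (del / 2). split; [lra|]. intros u Hu Hut.
  destruct (Req_dec u t) as [->|Hne].
  { rewrite !Rminus_diag, Rabs_R0, Rmult_0_r. lra. }
  assert (Hpos : 0 < Rabs (t - u)) by (apply Rabs_pos_lt; lra).
  assert (Hq : Rabs (f (gam t) - f (gam u)) / Rabs (t - u) <= c + eta).
  { rewrite <- (Hiso t u Ht Hu). apply (Hratio (del / 2)); [lra | apply HV; lra | |].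
    - rewrite Hiso; lra.
    - rewrite Hiso; lra. }
  rewrite (Rabs_minus_sym u t). eapply Rle_trans; [apply Rabs_triang_inv2|].
  rewrite Rabs_minus_sym.
  replace (Rabs (f (gam t) - f (gam u)))
    with (Rabs (f (gam t) - f (gam u)) / Rabs (t - u) * Rabs (t - u)) by (field; lra).
  apply Rmult_le_compat_r; lra.
Qed.

Theorem proposition3p1 (Y : Banach) (V : Y -> Prop) (f : Y -> R) (F : R -> R)
  (x0 : Y) (s : R -> R) (Rr : R) :
  is_convex V -> is_open V ->
  (forall a, 0 <= a -> 0 <= F a) ->
  nondecr_on_nonneg F ->
  loc_lipschitz_on_nonneg F ->
  V x0 ->
  0 < Rr ->
  (forall t, 0 <= t < Rr -> 0 <= s t) ->
  (forall t, 0 <= t < Rr -> deriv_within_0R s Rr t (F (s t))) ->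
  s 0 = Rabs (f x0) ->
  (forall x, V x -> metric_deriv_le V f x (F (Rabs (f x)))) ->
  forall x, V x -> vdist x x0 < Rr -> Rabs (f x) <= s (vdist x x0).
Proof.
  intros Hconv _ _ Hmono Hlip HV0 _ Hs_nonneg Hs_deriv Hs0 Hmd x Hx Hxd.
  set (d := vdist x x0) in *.
  destruct (Req_dec d 0) as [Hd0|Hd0].
  { rewrite Hd0, Hs0, (vdist_eq0 Y x x0 Hd0). lra. }
  assert (Hd : 0 < d) by (enough (0 <= d) by lra; apply vnorm_nonneg).
  set (gam t := segment Y x0 x (t / d)).
  assert (Hiso : forall u v, vdist (gam u) (gam v) = Rabs (u - v)).
  { intros u v. unfold gam. rewrite vdist_segment. fold d.
    replace (u / d - v / d) with ((u - v) * / d) by (field; lra).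
    rewrite Rabs_mult, Rabs_inv, (Rabs_right d); [field|]; lra. }
  assert (HV : forall t, 0 <= t <= d -> V (gam t)).
  { intros t Ht. apply Hconv; [exact HV0 | exact Hx |].
    assert (t / d * d = t) by (field; lra). split; nra. }
  assert (Hgam_d : gam d = x) by (unfold gam; rewrite Rdiv_diag by lra; apply segment_1).
  assert (Hgam_0 : gam 0 = x0) by (unfold gam; rewrite Rdiv_0_l; apply segment_0).
  rewrite <- Hgam_d at 1.
  apply (gap_comparison (fun t => Rabs (f (gam t))) s F d Rr); try assumption; try lra.
  - intros; apply Rabs_pos.
  - intros t Ht. apply slope_le_along_isometry with V; auto.
  - rewrite Hgam_0, Hs0. lra.
Qed.
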